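(* Let $A$ be an $\mathcal E$-algebra. For $\alpha, \beta \in A$ and $i \geq 0$ we have \begin{equation*} (23) F (\tilde{x}_i) (\alpha \otimes \alpha \otimes \beta \otimes \beta ) = (\alpha \cup_0 \beta) \cup_i (\alpha \cup_0 \beta) \end{equation*} and \begin{equation*} G(\tilde{x}_i) (\alpha \otimes \alpha \otimes \beta \otimes \beta) = \sum_{i=j+k} (\alpha \cup_j \alpha) \cup_0 (\beta \cup_k \beta). \end{equation*}
   Context: All constructions are over $\mathbb F_2$. $\mathcal E$ denotes the Barratt-Eccles operad: $\mathcal E(r) = N_*(E(r))$, the normalized chains of the simplicial set $E(r)$ whose $n$-simplices are tuples $(\sigma_0,\dots,\sigma_n)$ of permutations in $\Sigma_r$ (faces delete, degeneracies repeat an entry), with $\Sigma_r$ acting by left multiplication on each entry, and operadic composition $\circ_{\mathcal E} = N_*(\circ_E)\circ EZ^r$, where $\circ_E$ applies composition of permutations coordinatewise and $EZ$ is the Eilenberg-Zilber map. An $\mathcal E$-algebra $A$ is an operad morphism $\mathcal E \to \mathrm{End}(A)$; elements of $\mathcal E$ are identified with their images. Let $\tilde{x}_i = (e, (12), e, \dots, (12)^i) \in \mathcal E(2)_i$. The cup-$i$ product on $A$ is $\alpha \cup_i \beta := \tilde{x}_i(\alpha \otimes \beta)$. The chain maps $F, G : \mathcal E(2) \to \mathcal E(4)$ are defined on basis elements by $F(\sigma_0,\dots,\sigma_n) = \circ_{\mathcal E}\big((\sigma_0,\dots,\sigma_n) \otimes \tilde{x}_0 \otimes \tilde{x}_0\big)$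 and $G(\sigma_0,\dots,\sigma_n) = \circ_{\mathcal E}\big(\tilde{x}_0 \otimes AW(\sigma_0,\dots,\sigma_n)^{\otimes 2}\big)$, where $AW : N_*(E(2)\times E(2)) \to N_*(E(2))\otimes N_*(E(2))$ is the Alexander-Whitney map applied to the diagonal simplex $(\sigma_0,\dots,\sigma_n)\times(\sigma_0,\dots,\sigma_n)$ (so $AW(\tilde x_i\otimes\tilde x_i)=\sum_{j=0}^i \tilde x_j\otimes (12)^j\tilde x_{i-j}$). $(23) \in \Sigma_4$ acts on $\mathcal E(4)$. *)

From mathcomp Require Import all_boot all_order all_algebra all_fingroup.
Set Implicit Arguments. Unset Strict Implicit. Unset Printing Implicit Defensive.
Import GRing.Theory.
Local Open Scope ring_scope.

(* In mathcomp, (s * t)%g x = t (s x); we write the group product of the  *)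
(* paper as function composition: sigma . tau = (tau * sigma)%g.          *)

(* action of a permutation of 'I_n on natural-number indices (identity
   outside {0..n-1}) *)
Definition pnat n (s : 'S_n) (o : nat) : nat :=
  if (insub o : option 'I_n) is Some x then val (s x) else o.

Definition mkperm n (f : 'I_n -> 'I_n) : 'S_n :=
  match injectiveP f with ReflectT h => perm h | ReflectF _ => 1%g end.

(* splitting an index p into (block, offset) w.r.t. block sizes ls *)
Fixpoint blk (ls : seq nat) (p : nat) : nat * nat :=
  if ls is j :: ls' then
    if (p < j)%N then (0%N, p) else let bo := blk ls' (p - j) in (bo.1.+1, bo.2)
  else (0%N, p).

(* Operad structure of the associative operad Sigma_* (the one compatible
   with End(A) below): for sigma in Sigma_k and tau_i in Sigma_{l_i},
   rho = sigma(tau_1,..,tau_k) in Sigma_{l_1+..+l_k} sends the offset o of the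
   m-th output block (which has size l_{sigma(m)}) to
   start(sigma(m)) + tau_{sigma(m)}(o).  [tau i o] = tau_i(o). *)
Definition block_fun k (sigma : 'S_k) (ls : seq nat) (tau : nat -> nat -> nat)
  (p : nat) : nat :=
  let ls' := [seq nth 0%N ls (pnat sigma m) | m <- iota 0 k] in
  let bo := blk ls' p in
  let i := pnat sigma bo.1 in
  (sumn (take i ls) + tau i bo.2)%N.

Definition block_perm k (sigma : 'S_k) (ls : seq nat) (tau : nat -> nat -> nat)
  : 'S_(sumn ls) :=
  mkperm (fun p : 'I_(sumn ls) => insubd p (block_fun sigma ls tau p)).

(* An n-simplex is a sequence of n+1 permutations; a chain is a finite    *)
(* formal F_2-sum of simplices, represented by a list.  Degenerate        *)
(* simplices are zero in normalized chains (see [act_degen] below).       *)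

Definition simplex r := seq 'S_r.
Definition chain r := seq (simplex r).

Definition degenerate r (s : simplex r) : bool :=
  has (fun p => p.1 == p.2) (zip s (behead s)).

Definition sact r (sigma : 'S_r) (s : simplex r) : simplex r :=
  [seq (tau * sigma)%g | tau <- s].
Definition cact r (sigma : 'S_r) (c : chain r) : chain r := map (sact sigma) c.

(* boundary (sum of faces, no signs over F_2) *)
Definition boundary r (s : simplex r) : chain r :=
  if (size s <= 1)%N then [::]
  else [seq take i s ++ drop i.+1 s | i <- iota 0 (size s)].

(* shuffles: words in letters 0..size ns - 1 with letter c occurring
   nth 0 ns c times *)
Definition decr (ns : seq nat) (c : nat) := set_nth 0%N ns c (nth 0%N ns c).-1.
Fixpoint shuf (fuel : nat) (ns : seq nat) : seq (seq nat) :=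
  if fuel is f.+1 then
    flatten [seq [seq c :: w | w <- shuf f (decr ns c)]
            | c <- iota 0 (size ns) & (0 < nth 0%N ns c)%N]
  else [:: [::]].
Definition shuffles (ns : seq nat) := shuf (sumn ns) ns.

(* position reached in factor c after t steps of the shuffle path w *)
Definition pos (c t : nat) (w : seq nat) : nat := count_mem c (take t w).

Definition dsimplex := {n : nat & simplex n}.
Definition dnil : dsimplex := existT _ 0%N [::].

(* Operadic composition of E:
   gamma(s; s_1,..,s_k) = N_*(o_E) (EZ(s (x) s_1 (x) ... (x) s_k)),
   the (iterated) Eilenberg-Zilber map being the sum over shuffle paths
   (no signs over F_2); at each vertex of the path, the permutations are
   composed with the operad structure of Sigma_*. *)
Definition gammaE (ss : seq dsimplex) (s : simplex (size ss))
  : chain (sumn (map (@projT1 _ _) ss)) :=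
  let ns := (size s).-1 :: [seq (size (projT2 x)).-1 | x <- ss] in
  [seq [seq block_perm (nth 1%g s (pos 0 t w)) (map (@projT1 _ _) ss)
            (fun i o => pnat (nth 1%g (projT2 (nth dnil ss i)) (pos i.+1 t w)) o)
       | t <- iota 0 (size w).+1]
  | w <- shuffles ns].

(* A is a Z-graded F_2-vector space (total space A with the projections   *)
(* proj p onto the degree-p summand) with a differential dA of degree -1. *)
(* Hom(A^{(x) r}, A) is represented by r-multilinear maps; inputs are     *)
(* given as a : nat -> A, of which only a 0, .., a (r-1) are used.        *)
(* End(A): (sigma . f)(a_1..a_r) = f(a_sigma(1),..,a_sigma(r)),           *)
(*         gamma(f; g_1..g_k)(a) = f(g_1(block_1 a), .., g_k(block_k a)). *)
(* An E-algebra structure is an operad morphism E -> End(A) of dg operads, *)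
(* given by its values [act r s] on the basis simplices s of E(r).         *)

Definition upd (A : Type) (a : nat -> A) (m : nat) (x : A) : nat -> A :=
  fun l => if l == m then x else a l.

Unset Implicit Arguments.
Record EAlgebra (A : lmodType 'F_2) := {
  proj : int -> A -> A;
  dA : A -> A;
  act : forall r : nat, simplex r -> (nat -> A) -> A;
  proj_add : forall p x y, proj p (x + y) = proj p x + proj p y;
  proj_proj : forall p q x, proj p (proj q x) = if p == q then proj q x else 0;
  proj_sum : forall x, exists S : seq int, x = \sum_(p <- S) proj p x;
  dA_add : forall x y, dA (x + y) = dA x + dA y;
  dA_dA : forall x, dA (dA x) = 0;
  dA_deg : forall p x, proj (p - 1) (dA x) = dA (proj p x);
  act_ext : forall r s a b, (forall m, (m < r)%N -> a m = b m) ->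
     act r s a = act r s b;
  act_add : forall r s a m x y, (m < r)%N ->
     act r s (upd a m (x + y)) = act r s (upd a m x) + act r s (upd a m y);
  (* normalized chains: degenerate simplices act by zero *)
  act_degen : forall r s a, degenerate s -> act r s a = 0;
  act_deg : forall r s a (ps : nat -> int),
     (forall m, (m < r)%N -> proj (ps m) (a m) = a m) ->
     proj (\sum_(m < r) ps m + Posz (size s).-1) (act r s a) = act r s a;
  act_d : forall r s a,
     dA (act r s a) = \sum_(c <- boundary s) act r c a
                      + \sum_(m < r) act r s (upd a m (dA (a m)));
  act_equiv : forall r (sigma : 'S_r) s a,
     act r (sact sigma s) a = act r s (fun m => a (pnat sigma m));
  act_unit : forall a, act 1 [:: 1%g] a = a 0%N;
  act_comp : forall (ss : seq dsimplex) (s : simplex (size ss)) a,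
     s != [::] -> all (fun x : dsimplex => (0 < size (projT2 x))%N) ss ->
     \sum_(c <- gammaE s) act _ c a =
     act (size ss) s (fun i => act (projT1 (nth dnil ss i)) (projT2 (nth dnil ss i))
                 (fun o => a (sumn (take i (map (@projT1 _ _) ss)) + o)%N))
}.
Set Implicit Arguments.
Arguments act {A} e {r} _ _.
Arguments proj {A} e _ _.
Arguments dA {A} e _.

Definition actc (A : lmodType 'F_2) (B : EAlgebra A) r (c : chain r) (a : nat -> A) :=
  \sum_(s <- c) act B s a.

Definition t12 : 'S_2 := tperm (ord0 : 'I_2) ord_max.
Definition xt (i : nat) : simplex 2 := mkseq (fun l => (t12 ^+ l)%g) i.+1.

(* (23) in Sigma_4 (indices 0-based: swaps 1 and 2) *)
Definition t23 : 'S_4 := tperm (inord 1 : 'I_4) (inord 2).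

Definition args2 (A : lmodType 'F_2) (x y : A) : nat -> A := fun m => nth 0 [:: x; y] m.
Definition args4 (A : lmodType 'F_2) (x y z w : A) : nat -> A :=
  fun m => nth 0 [:: x; y; z; w] m.

Definition cup (A : lmodType 'F_2) (B : EAlgebra A) (i : nat) (x y : A) : A :=
  act B (xt i) (args2 x y).

Definition Fmap (s : simplex 2) : chain 4 :=
  gammaE (ss := [:: existT _ 2%N (xt 0); existT _ 2%N (xt 0)]) s.

Definition Gmap (s : simplex 2) : chain 4 :=
  flatten [seq (gammaE (ss := [:: existT _ 2%N (take j.+1 s); existT _ 2%N (drop j s)])
                     (xt 0) : chain 4)
          | j <- iota 0 (size s)].

From Pilot Require Import Defs.
From mathcomp Require Import all_boot all_order all_algebra all_fingroup.
(* Give [act] and [pnat] back their meaning from [Defs] over those of fingroup and prime. *)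
Import Defs.
Local Open Scope ring_scope.

(* Both identities are instances of the compatibility of the algebra with
   operadic composition: [F(x_i)] is [gamma(x_i; x_0, x_0)], and [(23)] only
   reorders the four inputs, while [G(x_i)] is the sum over [j] of
   [gamma(x_0; x_j, (12)^j x_(i-j))], where [(12)^j] acts trivially because
   both inputs of the second factor are [beta]. *)

Lemma pnat_val n (s : 'S_n) (x : 'I_n) : pnat s (val x) = val (s x).
Proof. by rewrite /pnat valK. Qed.

Lemma pnat_lt n (s : 'S_n) m : (m < n)%N -> (pnat s m < n)%N.
Proof. by move=> lt_mn; rewrite -[m]/(val (Ordinal lt_mn)) pnat_val ltn_ord. Qed.

Lemma pnat_out n (s : 'S_n) m : (n <= m)%N -> pnat s m = m.
Proof. by move=> le_nm; rewrite /pnat insubN // -leqNgt. Qed.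

Lemma pnat_tperm n (x y : 'I_n) m : (m < n)%N ->
  pnat (tperm x y) m = if m == x then val y else if m == y then val x else m.
Proof.
move=> lt_mn; rewrite -[m]/(val (Ordinal lt_mn)) pnat_val !val_eqE.
by rewrite permE /=; case: ifP => _; [|case: ifP].
Qed.

Lemma args4_t23 (A : lmodType 'F_2) (x y z w : A) m :
  args4 x y z w (pnat t23 m) = args4 x z y w m.
Proof.
case: (ltnP m 4) => [lt_m4 | le_4m]; last by rewrite pnat_out // /args4 !nth_default.
by rewrite pnat_tperm //= !inordK //; case: m lt_m4 => [|[|[|[|]]]].
Qed.

Lemma size_xt n : size (xt n) = n.+1.
Proof. exact: size_mkseq. Qed.

Lemma take_xt i j : (j <= i)%N -> take j.+1 (xt i) = xt j.
Proof. by move=> le_ji; rewrite /xt /mkseq -map_take take_iota (minn_idPl _). Qed.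

Lemma drop_xt i j : (j <= i)%N -> drop j (xt i) = sact (t12 ^+ j)%g (xt (i - j)).
Proof.
move=> le_ji; rewrite /xt /mkseq /sact -map_drop drop_iota add0n -map_comp.
rewrite -[j in iota j]addn0 iotaDl -map_comp subSn //.
by apply: eq_map => l /=; rewrite addnC expgD.
Qed.

Section EAlgebraFacts.

Variables (A : lmodType 'F_2) (B : EAlgebra A).

Lemma actc_cact r (sigma : 'S_r) (c : chain r) a :
  actc B (cact sigma c) a = actc B c (fun m => a (pnat sigma m)).
Proof. by rewrite /actc /cact big_map; apply: eq_bigr => s _; rewrite act_equiv. Qed.

Lemma act_sact_const r (sigma : 'S_r) s a x :
  (forall m, (m < r)%N -> a m = x) -> act B (sact sigma s) a = act B s a.
Proof.
move=> a_const; rewrite act_equiv; apply: act_ext => m lt_mr.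
by rewrite !a_const ?pnat_lt.
Qed.

Lemma actc_gamma22 (s s1 s2 : simplex 2) a :
  s != [::] -> (0 < size s1)%N -> (0 < size s2)%N ->
  actc B (gammaE (ss := [:: existT _ 2%N s1; existT _ 2%N s2]) s) a
    = act B s (args2 (act B s1 (args2 (a 0%N) (a 1%N)))
                     (act B s2 (args2 (a 2%N) (a 3%N)))).
Proof.
move=> s_nil s1_gt0 s2_gt0; rewrite /actc act_comp /= ?s1_gt0 ?s2_gt0 //.
by apply: act_ext => [[|[|m]]] // _; apply: act_ext => [[|[|o]]].
Qed.

End EAlgebraFacts.

Theorem mainTheorem1 (A : lmodType 'F_2) (B : EAlgebra A) (alpha beta : A) (i : nat) :
  actc B (cact t23 (Fmap (xt i))) (args4 alpha alpha beta beta)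
    = cup B i (cup B 0 alpha beta) (cup B 0 alpha beta)
  /\
  actc B (Gmap (xt i)) (args4 alpha alpha beta beta)
    = \sum_(j < i.+1) cup B 0 (cup B j alpha alpha) (cup B (i - j) beta beta).
Proof.
split; first by rewrite actc_cact actc_gamma22 ?size_xt //= !args4_t23.
rewrite /Gmap /actc big_flatten big_map size_xt.
rewrite -[iota 0 _]/(index_iota 0 i.+1) big_mkord; apply: eq_bigr => -[j lt_ji1] _.
rewrite -/(actc _ _ _).
have le_ji : (j <= i)%N by [].
rewrite take_xt // drop_xt // actc_gamma22 ?size_map ?size_xt //.
by rewrite (@act_sact_const _ _ _ _ _ _ beta) // => [[|[|]]].
Qed.
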